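(* Let $\mathbf{R}^{\mathrm{o}}$ be a finite set of obligations, $\mathbf{R}=(\emptyset,\mathbf{R}^{\mathrm{o}})$, $M$ an $\mathbf{R}$-ordered model and $w,v$ worlds of $M$. If $w\succ_I v$, then there exists $r_i\in\mathbf{R}^{\mathrm{o}}$ such that $w\models\mathrm{m}(r_i^{\triangleright})$ and $v\not\models\mathrm{m}(r_i^{\triangleright})$.
   Context: Boolean formulas over propositional letters; $\models_{\mathrm{PL}}$ classical, $\models_{\mathrm{S5}}$ S5 entailment. An obligation is $\bigcirc(x/a)$ ($a,x$ Boolean), body $b=a$, head $h=x$. Fix a set $\Gamma$ of alethic formulas; overriding: $r_j\triangleright r_i$ iff (i) $\{h(r_i),h(r_j)\}\cup\Gamma\models_{\mathrm{S5}}\bot$; (ii) $b(r_j)\models_{\mathrm{PL}}b(r_i)$ and $b(r_i)\not\models_{\mathrm{PL}}b(r_j)$; (iii) $\{h(r_i),b(r_j)\}\not\models_{\mathrm{PL}}\bot$. An $\mathbf{R}$-ordered model is $(W,\succeq_N,\succeq_I,v)$ with $W\neq\emptyset$, valuation, $\succeq_N=W\times W$, $w_1\succeq_I w_2$ iff $V(w_1)\subseteq V(w_2)$, where $V(w)=\{r_i\in\mathbf{R}^{\mathrm{o}}:w\models b(r_i)\wedge\neg h(r_i)$ and $w\not\models b(r_j)$ for all $r_j\in\mathbf{R}^{\mathrm{o}}$ with $r_j\triangleright r_i\}$; $w\succ_I v$ iff $w\succeq_I v$ and not $v\succeq_I w$. For $r_i=\bigcirc(x/a)$, $D(r_i)=\{r_j\in\mathbf{R}^{\mathrm{o}}:r_j\triangleright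 r_i\}$ and $r_i^{\triangleright}=(a\wedge\bigwedge_{r_j\in D(r_i)}\neg b(r_j),x)$ if $D(r_i)\neq\emptyset$, else $(a,x)$; $\mathrm{m}((c,y))=c\rightarrow y$. *)

From Stdlib Require Import List Classical ClassicalEpsilon.
Import ListNotations.

Inductive form : Type :=
| FVar : nat -> form
| FBot : form
| FTop : form
| FNeg : form -> form
| FAnd : form -> form -> form
| FOr  : form -> form -> form
| FImp : form -> form -> form.

Fixpoint sat (val : nat -> Prop) (f : form) : Prop :=
  match f with
  | FVar p => val p
  | FBot => False
  | FTop => True
  | FNeg a => ~ sat val a
  | FAnd a b => sat val a /\ sat val b
  | FOr a b => sat val a \/ sat val b
  | FImp a b => sat val a -> sat val b
  end.

Definition pl_entails (a b : form) : Prop :=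
  forall val : nat -> Prop, sat val a -> sat val b.

Definition pl_inconsistent2 (a b : form) : Prop :=
  forall val : nat -> Prop, ~ (sat val a /\ sat val b).

Inductive mform : Type :=
| MVar : nat -> mform
| MBot : mform
| MTop : mform
| MNeg : mform -> mform
| MAnd : mform -> mform -> mform
| MOr  : mform -> mform -> mform
| MImp : mform -> mform -> mform
| MBox : mform -> mform.

Fixpoint embed (f : form) : mform :=
  match f with
  | FVar p => MVar p
  | FBot => MBot
  | FTop => MTop
  | FNeg a => MNeg (embed a)
  | FAnd a b => MAnd (embed a) (embed b)
  | FOr a b => MOr (embed a) (embed b)
  | FImp a b => MImp (embed a) (embed b)
  end.

(* S5 semantics: universal accessibility on a nonempty set of worlds. *)
Fixpoint msat {W : Type} (val : W -> nat -> Prop) (w : W) (f : mform) : Prop :=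
  match f with
  | MVar p => val w p
  | MBot => False
  | MTop => True
  | MNeg a => ~ msat val w a
  | MAnd a b => msat val w a /\ msat val w b
  | MOr a b => msat val w a \/ msat val w b
  | MImp a b => msat val w a -> msat val w b
  | MBox a => forall u : W, msat val u a
  end.

(* {h1, h2} u Gamma |=_S5 bot (local consequence) *)
Definition s5_inconsistent (Gamma : mform -> Prop) (h1 h2 : form) : Prop :=
  forall (W : Type) (val : W -> nat -> Prop) (w : W),
    ~ (msat val w (embed h1) /\ msat val w (embed h2) /\
       (forall g, Gamma g -> msat val w g)).

(* An obligation O(x/a): body a, head x. *)
Record obligation : Type := Obl { head : form; body : form }.

Definition overrides (Gamma : mform -> Prop) (rj ri : obligation) : Prop :=
  s5_inconsistent Gamma (head ri) (head rj) /\
  (pl_entails (body rj) (body ri) /\ ~ pl_entails (body ri) (body rj)) /\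
  ~ pl_inconsistent2 (head ri) (body rj).

(* Violation set V(w) for R = (emptyset, Ro), with Ro a finite set (list). *)
Definition violated (Gamma : mform -> Prop) (Ro : list obligation)
    {W : Type} (val : W -> nat -> Prop) (w : W) (ri : obligation) : Prop :=
  In ri Ro /\ sat (val w) (body ri) /\ ~ sat (val w) (head ri) /\
  (forall rj, In rj Ro -> overrides Gamma rj ri -> ~ sat (val w) (body rj)).

Definition prefI (Gamma : mform -> Prop) (Ro : list obligation)
    {W : Type} (val : W -> nat -> Prop) (w1 w2 : W) : Prop :=
  forall r, violated Gamma Ro val w1 r -> violated Gamma Ro val w2 r.

Definition strict_prefI (Gamma : mform -> Prop) (Ro : list obligation)
    {W : Type} (val : W -> nat -> Prop) (w v : W) : Prop :=
  prefI Gamma Ro val w v /\ ~ prefI Gamma Ro val v w.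

Definition decP (P : Prop) : bool :=
  if excluded_middle_informative P then true else false.

Definition Dset (Gamma : mform -> Prop) (Ro : list obligation) (ri : obligation)
  : list obligation :=
  filter (fun rj => decP (overrides Gamma rj ri)) Ro.

Fixpoint conj_neg_bodies (r0 : obligation) (l : list obligation) : form :=
  match l with
  | [] => FNeg (body r0)
  | r1 :: l' => FAnd (FNeg (body r0)) (conj_neg_bodies r1 l')
  end.

(* r_i^|> as a pair (condition, head) *)
Definition rtri (Gamma : mform -> Prop) (Ro : list obligation) (ri : obligation)
  : form * form :=
  match Dset Gamma Ro ri with
  | [] => (body ri, head ri)
  | r0 :: l => (FAnd (body ri) (conj_neg_bodies r0 l), head ri)
  end.

Definition mat (p : form * form) : form := FImp (fst p) (snd p).

(* The material implication m(r^▷) of an obligation r in Ro fails at a world exactly when r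
   is violated there (its body holds, its head fails, and no overriding obligation fires).
   If w is strictly I-better than v, some obligation is violated at v but not at w, and its
   m(r^▷) is then true at w and false at v. *)

From Pilot Require Import Defs.
From Stdlib Require Import List Classical ClassicalEpsilon.

Lemma sat_conj_neg_bodies (val : nat -> Prop) (r0 : obligation) (l : list obligation) :
  sat val (conj_neg_bodies r0 l) <-> (forall r, In r (r0 :: l) -> ~ sat val (body r)).
Proof.
  revert r0; induction l as [|r1 l IH]; intros r0; simpl.
  - split.
    + intros H r [<- | []]; exact H.
    + intros H; apply H; left; reflexivity.
  - rewrite IH; split.
    + intros [H0 Hl] r [<- | Hr]; [exact H0 | exact (Hl r Hr)].
    + intros H; split; intros; apply H; simpl; tauto.
Qed.

Lemma In_Dset (Gamma : mform -> Prop) (Ro : list obligation) (ri rj : obligation) :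
  In rj (Dset Gamma Ro ri) <-> In rj Ro /\ overrides Gamma rj ri.
Proof.
  unfold Dset, decP; rewrite filter_In.
  destruct (excluded_middle_informative (overrides Gamma rj ri)); intuition discriminate.
Qed.

Lemma sat_mat_rtri (Gamma : mform -> Prop) (Ro : list obligation) (ri : obligation)
    (val : nat -> Prop) :
  sat val (mat (rtri Gamma Ro ri)) <->
  (sat val (body ri) ->
   (forall rj, In rj Ro -> overrides Gamma rj ri -> ~ sat val (body rj)) ->
   sat val (Defs.head ri)).
Proof.
  unfold mat, rtri.
  assert (HD : forall rj, In rj (Dset Gamma Ro ri) <-> In rj Ro /\ overrides Gamma rj ri)
    by (intros; apply In_Dset).
  destruct (Dset Gamma Ro ri) as [| r0 l]; simpl.
  - split.
    + intros H Hb _; exact (H Hb).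
    + intros H Hb; apply H; [exact Hb |].
      intros rj Hin Ho; exfalso; apply (proj2 (HD rj)); tauto.
  - rewrite sat_conj_neg_bodies; split.
    + intros H Hb Hn; apply H; split; [exact Hb |].
      intros r Hr; apply HD in Hr as [Hin Ho]; exact (Hn r Hin Ho).
    + intros H [Hb Hn]; apply H; [exact Hb |].
      intros rj Hin Ho; apply Hn, HD; tauto.
Qed.

Lemma sat_mat_rtri_not_violated (Gamma : mform -> Prop) (Ro : list obligation)
    (W : Type) (val : W -> nat -> Prop) (w : W) (ri : obligation) :
  In ri Ro ->
  (sat (val w) (mat (rtri Gamma Ro ri)) <-> ~ violated Gamma Ro val w ri).
Proof.
  intros Hin; rewrite sat_mat_rtri; unfold violated; split.
  - intros H (_ & Hb & Hh & Hn); exact (Hh (H Hb Hn)).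
  - intros H Hb Hn; apply NNPP; intros Hh; exact (H (conj Hin (conj Hb (conj Hh Hn)))).
Qed.

Lemma not_prefI_violated (Gamma : mform -> Prop) (Ro : list obligation)
    (W : Type) (val : W -> nat -> Prop) (v w : W) :
  ~ prefI Gamma Ro val v w ->
  exists r, violated Gamma Ro val v r /\ ~ violated Gamma Ro val w r.
Proof.
  intros H; apply not_all_ex_not in H as [r Hr].
  exists r; exact (imply_to_and _ _ Hr).
Qed.

Theorem lemma2 (Gamma : mform -> Prop) (Ro : list obligation)
    (W : Type) (val : W -> nat -> Prop) (HW : inhabited W) (w v : W) :
  strict_prefI Gamma Ro val w v ->
  exists ri, In ri Ro /\
    sat (val w) (mat (rtri Gamma Ro ri)) /\
    ~ sat (val v) (mat (rtri Gamma Ro ri)).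
Proof.
  intros [_ Hvw].
  destruct (not_prefI_violated Gamma Ro W val v w Hvw) as [r [Hv Hw]].
  assert (Hin : In r Ro) by apply Hv.
  exists r; split; [exact Hin |].
  rewrite !(sat_mat_rtri_not_violated Gamma Ro W val _ r Hin).
  tauto.
Qed.
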